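(* Let $\mathbf{C}$ be a locally small category all of whose morphisms are monomorphisms, and let $\mathfrak{G} = (G_A)_{A \in \mathrm{Ob}(\mathbf{C})}$ be a family of groups with $G_A \le \mathrm{Aut}_\mathbf{C}(A)$ for all $A$. Then for every $A \in \mathrm{Ob}(\mathbf{C})$, $$t_\mathbf{C}(A) = |G_A| \cdot t^\mathfrak{G}_\mathbf{C}(A),$$ where the equality is read in $\mathbb{N}_\infty$ (in particular, if $G_A$ is infinite then $t_\mathbf{C}(A) = \infty$).
   Context: $\mathrm{Aut}_\mathbf{C}(A)$ is the group of invertible morphisms $A \to A$. For $f, g \in \hom(A,B)$ write $f \sim_\mathfrak{G} g$ if $f = g \cdot \alpha$ for some $\alpha \in G_A$; let $\binom{B}{A}_\mathfrak{G} = \hom(A,B)/{\sim_\mathfrak{G}} = \{f \cdot G_A : f \in \hom(A,B)\}$, and for $w \in \hom(B,C)$ let $w \cdot \binom{B}{A}_\mathfrak{G} = \{(w\cdot f)/{\sim_\mathfrak{G}} : f \in \hom(A,B)\}$. For $k,t \in \mathbb{N}$, $C \overset{\mathfrak{G}}{\longrightarrow} (B)^A_{k,t}$ means: for every coloring $\chi : \binom{C}{A}_\mathfrak{G} \to k=\{0,\dots,k-1\}$ there is $w \in \hom(B,C)$ with $|\chi(w \cdot \binom{B}{A}_\mathfrak{G})| \le t$. The small $\mathfrak{G}$-Ramsey degree $t^\mathfrak{G}_\mathbf{C}(A)$ is the least positive integer $n$ such that for all $k \in \mathbb{N}$ and all $B \in \mathrm{Ob}(\mathbf{C})$ there is $C$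 with $C \overset{\mathfrak{G}}{\longrightarrow} (B)^A_{k,n}$, and $\infty$ if there is none. The small embedding Ramsey degree $t_\mathbf{C}(A)$ is $t^\mathfrak{G}_\mathbf{C}(A)$ for the family $G_A = \{\mathrm{id}_A\}$ (so classes are single morphisms). Convention: $\mathbb{N}_\infty = \{1,2,\dots,\infty\}$ with $\infty \cdot n = n \cdot \infty = \infty\cdot\infty = \infty$, and $|G_A|$ is taken to be $\infty$ when $G_A$ is infinite. *)

From mathcomp Require Import all_boot.
From Stdlib Require Import ClassicalEpsilon.
Set Implicit Arguments. Unset Strict Implicit. Unset Printing Implicit Defensive.

(* A category (hom-types play the role of hom-sets: locally small). *)
Record category := Category {
  Ob : Type;
  hom : Ob -> Ob -> Type;
  comp : forall A B C : Ob, hom B C -> hom A B -> hom A C;  (* comp g f = g . f *)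
  idm : forall A : Ob, hom A A;
  comp_assoc : forall (A B C D : Ob) (h : hom C D) (g : hom B C) (f : hom A B),
      comp h (comp g f) = comp (comp h g) f;
  comp_id_l : forall (A B : Ob) (f : hom A B), comp (idm B) f = f;
  comp_id_r : forall (A B : Ob) (f : hom A B), comp f (idm A) = f
}.
Arguments comp {c A B C}.
Arguments idm {c}.

Definition all_mono (Cat : category) : Prop :=
  forall (A B D : Ob Cat) (h : hom B D) (f g : hom A B), comp h f = comp h g -> f = g.

Definition is_aut (Cat : category) (A : Ob Cat) (f : hom A A) : Prop :=
  exists g : hom A A, comp g f = idm A /\ comp f g = idm A.

Definition subgroup_family (Cat : category) (G : forall A : Ob Cat, hom A A -> Prop) : Prop :=
  forall A : Ob Cat,
    (forall f, G A f -> is_aut f) /\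
    G A (idm A) /\
    (forall f g, G A f -> G A g -> G A (comp f g)) /\
    (forall f, G A f -> exists g, G A g /\ comp g f = idm A /\ comp f g = idm A).

(* colorings chi : binom(C,A)_G -> k, represented as maps on hom(A,C)
   constant on the classes f . G_A *)
Definition G_coloring (Cat : category) (G : forall A : Ob Cat, hom A A -> Prop)
  (A C : Ob Cat) (k : nat) (chi : hom A C -> 'I_k) : Prop :=
  forall (f : hom A C) (a : hom A A), G A a -> chi (comp f a) = chi f.

Definition G_arrow (Cat : category) (G : forall A : Ob Cat, hom A A -> Prop)
  (C B A : Ob Cat) (k t : nat) : Prop :=
  forall chi : hom A C -> 'I_k, G_coloring G chi ->
    exists (w : hom B C) (S : {set 'I_k}),
      #|S| <= t /\ forall f : hom A B, chi (comp w f) \in S.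

(* N_infinity: Some n = n, None = infinity *)
Definition natinf := option nat.
Definition mulinf (x y : natinf) : natinf :=
  match x, y with Some a, Some b => Some (a * b) | _, _ => None end.

Definition is_least_pos (P : nat -> Prop) (d : natinf) : Prop :=
  match d with
  | Some n => 0 < n /\ P n /\ forall m, 0 < m -> P m -> n <= m
  | None => forall n, 0 < n -> ~ P n
  end.

Definition least_pos (P : nat -> Prop) : natinf :=
  epsilon (inhabits None) (is_least_pos P).

Definition G_ramsey_prop (Cat : category) (G : forall A : Ob Cat, hom A A -> Prop)
  (A : Ob Cat) (n : nat) : Prop :=
  forall (k : nat) (B : Ob Cat), exists C : Ob Cat, G_arrow G C B A k n.

Definition G_ramsey_degree (Cat : category) (G : forall A : Ob Cat, hom A A -> Prop)
  (A : Ob Cat) : natinf := least_pos (G_ramsey_prop G A).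

Definition trivial_family (Cat : category) (A : Ob Cat) (f : hom A A) : Prop := f = idm A.
Definition ramsey_degree (Cat : category) (A : Ob Cat) : natinf :=
  G_ramsey_degree (@trivial_family Cat) A.

Definition is_card (T : Type) (P : T -> Prop) (d : natinf) : Prop :=
  match d with
  | Some n => exists (e : 'I_n -> T),
      injective e /\ (forall i, P (e i)) /\ (forall x, P x -> exists i, e i = x)
  | None => forall n (e : 'I_n -> T),
      injective e -> (forall i, P (e i)) -> ~ (forall x, P x -> exists i, e i = x)
  end.

Definition card_inf (T : Type) (P : T -> Prop) : natinf :=
  epsilon (inhabits None) (is_card P).

(* Let e_1, ..., e_g enumerate G_A and fix, by choice, a representative r(x) of
   every class x G_A.  Since all morphisms are monic, x = r(x) e_i for exactly
   one i, so an arbitrary colouring chi of hom(A, C) is recovered from the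
   G-invariant colouring x |-> (chi(r(x) e_i))_i, and a G-invariant colouring
   chi can be refined to the colouring x |-> (chi x, i).  The first translation
   turns a G-arrow with at most n colours into an embedding arrow with at most
   g n colours; the second shows that any embedding arrow with at most m
   colours yields a G-arrow with at most m / g colours, because on every copy
   w hom(A, B) each G-colour is seen together with all g indices.  Taking B = A
   in the second argument also gives g <= m, so no finite embedding degree
   exists when G_A is infinite. *)

From Pilot Require Import Defs.
From Stdlib Require Import ClassicalEpsilon FunctionalExtensionality PropExtensionality Classical.
From mathcomp Require Import all_boot.

Set Implicit Arguments. Unset Strict Implicit. Unset Printing Implicit Defensive.

Lemma least_pos_spec (P : nat -> Prop) : is_least_pos P (least_pos P).
Proof.
apply: epsilon_spec.
case: (classic (exists n, 0 < n /\ P n)) => [[n [n_gt0 Pn]]|no_pos]; last first.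
  by exists None => n n_gt0 Pn; apply: no_pos; exists n.
elim: n {-2}n (leqnn n) n_gt0 Pn => [|bound IH] n le_n n_gt0 Pn.
  by move: le_n; rewrite leqn0 => /eqP n0; rewrite n0 in n_gt0.
case: (classic (exists m, m < n /\ 0 < m /\ P m)) => [[m [lt_mn [m_gt0 Pm]]]|minimal].
  by apply: (IH m) => //; rewrite -ltnS (leq_trans lt_mn).
exists (Some n); do 2!split=> //; move=> m m_gt0 Pm.
by rewrite leqNgt; apply/negP => lt_mn; apply: minimal; exists m.
Qed.

Lemma least_pos_eq (P : nat -> Prop) (d : natinf) :
  is_least_pos P d -> least_pos P = d.
Proof.
have := least_pos_spec P.
case: (least_pos P) => [n [n_gt0 [Pn n_min]]|no_pos];
  case: d => [d [d_gt0 [Pd d_min]]|no_pos'] //.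
- by congr Some; apply/eqP; rewrite eqn_leq n_min // d_min.
- by case: (no_pos' n).
- by case: (no_pos d).
Qed.

Lemma least_pos_mul (P Q : nat -> Prop) (g : nat) : 0 < g ->
    (forall n, P n -> Q (g * n)) -> (forall m, Q m -> P (m %/ g) /\ g <= m) ->
  least_pos Q = mulinf (Some g) (least_pos P).
Proof.
move=> g_gt0 PQ QP; apply: least_pos_eq.
have := least_pos_spec P; case: (least_pos P) => [n [n_gt0 [Pn n_min]]|no_pos] /=.
  split; first by rewrite muln_gt0 g_gt0.
  split=> [|m _ Qm]; first exact: PQ.
  have [Pm le_gm] := QP m Qm.
  by rewrite mulnC -leq_divRL // n_min // divn_gt0.
move=> m _ Qm; have [Pm le_gm] := QP m Qm.
by apply: (no_pos (m %/ g)); rewrite ?divn_gt0.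
Qed.

Lemma card_inf_spec (T : Type) (P : T -> Prop) : is_card P (card_inf P).
Proof.
apply: epsilon_spec.
case: (classic (exists n : nat, is_card P (Some n))) => [[n Pn]|not_fin].
  by exists (Some n).
by exists None => n e e_inj Pe e_onto; apply: not_fin; exists n, e.
Qed.

Lemma is_card_None_inj (T : Type) (P : T -> Prop) (x0 : T) : is_card P None ->
  forall n, exists e : 'I_n -> T, injective e /\ forall i, P (e i).
Proof.
move=> P_inf; elim=> [|n [e [e_inj Pe]]].
  by exists (fun=> x0); split=> -[].
have [x [Px x_new]] : exists x, P x /\ forall i, e i <> x.
  apply: NNPP => all_old; apply: (P_inf n e e_inj Pe) => x Px.
  apply: NNPP => x_new; apply: all_old; exists x; split=> // i ei.
  by apply: x_new; exists i.
pose e' (i : 'I_n.+1) := if unlift ord_max i is Some j then e j else x.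
exists e'; split=> [i1 i2|i]; rewrite /e'; last by case: (unlift ord_max i).
case: (unliftP ord_max i1) => [j1 ->|->]; case: (unliftP ord_max i2) => [j2 ->|->] //.
- by move/e_inj->.
- by move/x_new.
- by move/esym/x_new.
Qed.

Local Notation "h ∘ f" := (Defs.comp h f) (at level 40, left associativity).

Lemma G_arrow_fin (Cat : category) (G : forall A : Ob Cat, hom A A -> Prop)
  (C B A : Ob Cat) (T : finType) (t : nat) :
    G_arrow G C B A #|T| t ->
  forall chi : hom A C -> T, (forall f a, G A a -> chi (f ∘ a) = chi f) ->
  exists (w : hom B C) (S : {set T}), #|S| <= t /\ forall f, chi (w ∘ f) \in S.
Proof.
move=> arrow chi chi_inv.
have [|w [S [card_S S_col]]] := arrow (fun f => enum_rank (chi f)).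
  by move=> f a Ga /=; rewrite chi_inv.
exists w, (enum_val @: S); split; first exact: leq_trans (leq_imset_card _ _) card_S.
by move=> f; rewrite -[chi _]enum_rankK imset_f.
Qed.

Section GRamsey.

Variables (Cat : category) (G : forall A : Ob Cat, hom A A -> Prop).
Arguments G : clear implicits.

Hypothesis HG : subgroup_family G.
Variable A : Ob Cat.

Let G_id : G A (idm A). Proof. exact: (HG A).2.1. Qed.

Let G_comp a b : G A a -> G A b -> G A (a ∘ b). Proof. exact: (HG A).2.2.1. Qed.

Let G_inv a : G A a -> exists b, [/\ G A b, b ∘ a = idm A & a ∘ b = idm A].
Proof. by move=> Ga; have [b [Gb [ba ab]]] := (HG A).2.2.2 a Ga; exists b. Qed.

Definition coset (C : Ob Cat) (x : hom A C) (y : hom A C) : Prop :=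
  exists2 a, G A a & y = x ∘ a.

Definition coset_rep (C : Ob Cat) (x : hom A C) : hom A C :=
  epsilon (inhabits x) (coset x).

Lemma coset_repP (C : Ob Cat) (x : hom A C) :
  exists2 a, G A a & coset_rep x = x ∘ a.
Proof.
by apply: (epsilon_spec _ (coset x)); exists x, (idm A); rewrite ?comp_id_r.
Qed.

Lemma coset_repP_inv (C : Ob Cat) (x : hom A C) :
  exists2 a, G A a & x = coset_rep x ∘ a.
Proof.
have [a Ga ->] := coset_repP x; have [b [Gb _ ab]] := G_inv Ga.
by exists b; rewrite // -comp_assoc ab comp_id_r.
Qed.

Lemma coset_rep_comp (C : Ob Cat) (x : hom A C) (b : hom A A) :
  G A b -> coset_rep (x ∘ b) = coset_rep x.
Proof.
move=> Gb; have [b' [Gb' _ bb']] := G_inv Gb; rewrite /coset_rep.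
have -> : coset (x ∘ b) = coset x.
  apply: functional_extensionality => y; apply: propositional_extensionality.
  split=> -[a Ga ->].
    by exists (b ∘ a); [apply: G_comp | rewrite comp_assoc].
  exists (b' ∘ a); first exact: G_comp.
  by rewrite !comp_assoc -(comp_assoc x) bb' comp_id_r.
by apply: epsilon_inh_irrelevance; exists x, (idm A); rewrite ?comp_id_r.
Qed.

Lemma G_ramsey_prop_mul (I : finType) (e : I -> hom A A) :
    (forall a, G A a -> exists i, e i = a) ->
  forall n, G_ramsey_prop G A n -> G_ramsey_prop (@trivial_family Cat) A (#|I| * n).
Proof.
move=> e_onto n G_ramsey k B.
have [C arrow] := G_ramsey #|{: {ffun I -> 'I_k}}| B.
exists C => chi _.
pose chi_G (x : hom A C) := [ffun i => chi (coset_rep x ∘ e i)].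
have [|w [S [card_S S_col]]] := G_arrow_fin arrow (chi := chi_G).
  by move=> f a Ga; apply/ffunP => i; rewrite !ffunE coset_rep_comp.
exists w, ((fun p : {ffun I -> 'I_k} * I => p.1 p.2) @: setX S [set: I]); split.
  apply: leq_trans (leq_imset_card _ _) _.
  by rewrite cardsX cardsT mulnC leq_mul2l card_S orbT.
move=> f; have [a Ga wf] := coset_repP_inv (w ∘ f); have [i ei] := e_onto a Ga.
apply/imsetP; exists (chi_G (w ∘ f), i); first by rewrite !inE S_col.
by rewrite /= ffunE ei -wf.
Qed.

Hypothesis Hmono : all_mono Cat.

Variables (I : finType) (i0 : I) (e : I -> hom A A).
Hypotheses (e_inj : injective e) (e_G : forall i, G A (e i)).

(* [i0] is only a default value for the choice below; it never matters. *)
Definition coset_index (C : Ob Cat) (x : hom A C) : I :=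
  epsilon (inhabits i0) (fun i => x = coset_rep x ∘ e i).

Lemma coset_index_rep (C : Ob Cat) (x : hom A C) (i : I) :
  coset_index (coset_rep x ∘ e i) = i.
Proof.
have rep_y : coset_rep (coset_rep x ∘ e i) = coset_rep x.
  have [a Ga rep_x] := coset_repP x.
  by rewrite {1}rep_x -comp_assoc coset_rep_comp //; apply: G_comp.
set y := coset_rep x ∘ e i.
have : y = coset_rep y ∘ e (coset_index y).
  by apply: (epsilon_spec _ (fun j => y = coset_rep y ∘ e j)); exists i; rewrite rep_y.
by rewrite rep_y => /Hmono /e_inj.
Qed.

Lemma trivial_arrow_G_coloring (C B : Ob Cat) (k m : nat) :
    G_arrow (@trivial_family Cat) C B A #|{: 'I_k * I}| m ->
  forall chi : hom A C -> 'I_k, G_coloring G chi ->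
  exists (w : hom B C) (S : {set 'I_k}),
    #|S| * #|I| <= m /\ forall f : hom A B, chi (w ∘ f) \in S.
Proof.
move=> arrow chi chi_inv.
pose chi_idx (x : hom A C) := (chi x, coset_index x).
have [|w [S [card_S S_col]]] := G_arrow_fin arrow (chi := chi_idx).
  by move=> f a ->; rewrite comp_id_r.
exists w, [set c | [forall i, (c, i) \in S]]; split.
  rewrite -cardsT -cardsX; apply: leq_trans card_S; apply: subset_leq_card.
  by apply/subsetP => -[c i]; rewrite !inE andbT => /forallP.
move=> f; rewrite inE; apply/forallP => i.
have [a Ga wf] := coset_repP (w ∘ f).
have := S_col (f ∘ (a ∘ e i)).
rewrite /chi_idx !comp_assoc -wf coset_index_rep wf -comp_assoc chi_inv //.
exact: G_comp.
Qed.

Lemma G_ramsey_prop_div (m : nat) :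
  G_ramsey_prop (@trivial_family Cat) A m -> G_ramsey_prop G A (m %/ #|I|).
Proof.
move=> ramsey k B; have [C arrow] := ramsey #|{: 'I_k * I}| B.
exists C => chi chi_inv.
have [w [S [card_S S_col]]] := trivial_arrow_G_coloring arrow chi_inv.
have I_gt0 : 0 < #|I| by apply/card_gt0P; exists i0.
by exists w, S; rewrite leq_divRL.
Qed.

Lemma card_le_ramsey (m : nat) :
  G_ramsey_prop (@trivial_family Cat) A m -> #|I| <= m.
Proof.
move=> ramsey; have [C arrow] := ramsey #|{: 'I_1 * I}| A.
have [//|w [S [card_S S_col]]] := trivial_arrow_G_coloring arrow (chi := fun=> ord0).
have S_gt0 : 0 < #|S| by apply/card_gt0P; exists ord0; apply: (S_col (idm A)).
exact: leq_trans (leq_pmull _ S_gt0) card_S.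
Qed.

End GRamsey.

Theorem proposition3p3 (Cat : category) (G : forall A : Ob Cat, hom A A -> Prop)
  (Hmono : all_mono Cat) (HG : subgroup_family G) (A : Ob Cat) :
  ramsey_degree A = mulinf (card_inf (G A)) (G_ramsey_degree G A).
Proof.
have := card_inf_spec (G A).
case: (card_inf (G A)) => [g [e [e_inj [e_G e_onto]]]|G_inf].
  have [i0 _] := e_onto _ (HG A).2.1.
  apply: least_pos_mul => [|n G_ramsey|m ramsey]; first exact: leq_ltn_trans (ltn_ord i0).
    by have := G_ramsey_prop_mul HG e_onto G_ramsey; rewrite card_ord.
  have := G_ramsey_prop_div HG Hmono i0 e_inj e_G ramsey.
  by have := card_le_ramsey HG Hmono i0 e_inj e_G ramsey; rewrite !card_ord.
apply: least_pos_eq => m _ ramsey.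
have [e [e_inj e_G]] := is_card_None_inj (idm A) G_inf m.+1.
by have := card_le_ramsey HG Hmono ord0 e_inj e_G ramsey; rewrite card_ord ltnn.
Qed.
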